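(* Let $\alpha:R\to R'$ be a Jordan homomorphism of rings and let $T=(t_1,\ldots,t_n)\in R^n$, $n\geq 0$; write $T^\alpha=(t_1^\alpha,\ldots,t_n^\alpha)$. Then: (a) if $e^{(n)}(T)\in R^*$ then $e^{(n)}(T^\alpha)\in R'^*$; (b) if $e^{(n)}(T)\in R^*$ and $e^{(n-1)}(T)=0$ then $e^{(n-1)}(T^\alpha)=0'$.
   Context: Rings are associative with $1$; $R^*$ denotes the group of units. A Jordan homomorphism $\alpha:R\to R'$ is a map with $(a+b)^\alpha=a^\alpha+b^\alpha$, $1^\alpha=1'$, $(aba)^\alpha=a^\alpha b^\alpha a^\alpha$ for all $a,b\in R$. Let $\mathbb{Z}\langle X\rangle$ be the free $\mathbb{Z}$-algebra on non-commuting indeterminates $x_1,x_2,\ldots$; define $e^{(-2)}:=-1$, $e^{(-1)}:=0$, $e^{(0)}:=1$, $e^{(n)}:=e^{(n-1)}x_n-e^{(n-2)}$ for $n\geq1$. For a finite sequence $S=(s_1,\ldots,s_m)$ in a ring, $e^{(k)}(S)$ is the image of $e^{(k)}$ under $x_i\mapsto s_i$ ($i\leq m$), $x_i\mapsto 0$ ($i>m$); in particular $e^{(n-1)}(T)=e^{(n-1)}(t_1,\ldots,t_{n-1})$. *)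

From HB Require Import structures.
From mathcomp Require Import all_boot all_order all_algebra.
Set Implicit Arguments. Unset Strict Implicit. Unset Printing Implicit Defensive.
Import GRing.Theory.
Local Open Scope ring_scope.

(* Rings: associative with 1, not necessarily commutative, possibly the zero
   ring: MathComp's pzRingType. *)

Definition is_unit (R : pzRingType) (a : R) : Prop :=
  exists b : R, a * b = 1 /\ b * a = 1.

Definition jordan_hom (R R' : pzRingType) (f : R -> R') : Prop :=
  [/\ forall a b, f (a + b) = f a + f b,
      f 1 = 1 &
      forall a b, f (a * b * a) = f a * f b * f a].

(* e_pair s n = (e^{(n-1)}(s), e^{(n)}(s)) where s = (s_1,...,s_m) is a list,
   x_i |-> s_i for i <= m and x_i |-> 0 for i > m (nth 0 s (i-1) = s_i). *)
Fixpoint e_pair (R : pzRingType) (s : seq R) (n : nat) : R * R :=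
  match n with
  | 0 => (0, 1)
  | n'.+1 => let: (a, b) := e_pair s n' in (b, b * nth 0 s n' - a)
  end.

Definition e_poly (R : pzRingType) (s : seq R) (n : nat) : R := (e_pair s n).2.
(* e^{(n-1)}(s) for n >= 0 (so e_poly_pred s 0 = e^{(-1)} = 0) *)
Definition e_poly_pred (R : pzRingType) (s : seq R) (n : nat) : R := (e_pair s n).1.

(* Let M(t) = [[0,-1],[1,t]], P = M(t_1)...M(t_n) and Q = M(t_n)^T...M(t_1)^T,
   i.e. the transpose of P computed in the opposite ring.  The bottom row of P
   is (e^{(n-1)}(T), e^{(n)}(T)), and Q_11 = (P^-1)_00.
   A Jordan homomorphism f does not respect products, but it does respect the
   quadratic maps X |-> M(t) X M(t)^T on a class of 2x2 matrices stable under
   them, so f((P X Q)_11) = (P' Y Q')_11 for the corresponding products P', Q'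
   over T^f.  Taking X = diag(0, x) and X = E_01 this gives
     f(e x Q_11) = e' f(x) Q'_11   and   f(e^{(n-1)} Q_11) = e'^{(n-1)} Q'_11.
   If e = e^{(n)}(T) is a unit then so is Q_11 = (P^-1)_00 (Schur complement);
   choosing x = e^-1 Q_11^-1 makes the left side f(1) = 1, so e' is right
   invertible and Q'_11 = (P'^-1)_00 is left invertible.  Schur complements in
   P' then make e' a unit and Q'_11 right invertible, which cancels in the
   second identity when e^{(n-1)} = 0. *)

From HB Require Import structures.
From mathcomp Require Import all_boot all_order all_algebra.
Import GRing.Theory.
Local Open Scope ring_scope.
Set Implicit Arguments. Unset Strict Implicit.

Local Notation i0 := (ord0 : 'I_2).
Local Notation i1 := (ord_max : 'I_2).

Section TwoByTwo.
Variable R : pzRingType.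
Implicit Types (a b c d : R) (A B : 'M[R]_2).

Lemma ord2P (i : 'I_2) : i = i0 \/ i = i1.
Proof. case: i => [[|[|//]]] H; [left|right]; exact: val_inj. Qed.

Definition mx2 a b c d : 'M[R]_2 :=
  \matrix_(i, j) if i == i0 then (if j == i0 then a else b)
                 else (if j == i0 then c else d).

Lemma mx2E00 a b c d : mx2 a b c d i0 i0 = a. Proof. by rewrite mxE. Qed.
Lemma mx2E01 a b c d : mx2 a b c d i0 i1 = b. Proof. by rewrite mxE. Qed.
Lemma mx2E10 a b c d : mx2 a b c d i1 i0 = c. Proof. by rewrite mxE. Qed.
Lemma mx2E11 a b c d : mx2 a b c d i1 i1 = d. Proof. by rewrite mxE. Qed.

Lemma mx2_eta A : A = mx2 (A i0 i0) (A i0 i1) (A i1 i0) (A i1 i1).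
Proof.
apply/matrixP => i j; rewrite mxE.
by case: (ord2P i) => ->; case: (ord2P j) => ->.
Qed.

Lemma mx2_mulE A B i j : (A *m B) i j = A i i0 * B i0 j + A i i1 * B i1 j.
Proof.
by rewrite mxE big_ord_recl big_ord1 (_ : lift ord0 ord0 = i1) //; apply: val_inj.
Qed.

Lemma mul_mx2 a b c d a' b' c' d' :
  mx2 a b c d *m mx2 a' b' c' d' =
  mx2 (a * a' + b * c') (a * b' + b * d') (c * a' + d * c') (c * b' + d * d').
Proof.
apply/matrixP => i j; rewrite mx2_mulE !mxE.
by case: (ord2P i) => ->; case: (ord2P j) => ->.
Qed.

Lemma mx2_1 : 1%:M = mx2 1 0 0 1.
Proof.
apply/matrixP => i j; rewrite !mxE.
by case: (ord2P i) => ->; case: (ord2P j) => ->.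
Qed.

End TwoByTwo.
Arguments mx2 {R}.

Ltac mx2_simpl :=
  rewrite ?(mul0r, mulr0, mul1r, mulr1, mulN1r, mulrN1, add0r, addr0, opprK,
            mulNr, mulrN, subrr, oppr0, mx2E00, mx2E01, mx2E10, mx2E11).

Section Continuants.
Variable R : pzRingType.
Implicit Types (t : R) (s : seq R).

(* [cont_prodT s n] is the transpose of [cont_prod s n] computed in the
   opposite ring, and [rot_mx] conjugates [cont_mxV t] into [cont_mxT t]. *)
Definition cont_mx t : 'M[R]_2 := mx2 0 (-1) 1 t.
Definition cont_mxT t : 'M[R]_2 := mx2 0 1 (-1) t.
Definition cont_mxV t : 'M[R]_2 := mx2 t 1 (-1) 0.
Definition rot_mx : 'M[R]_2 := mx2 0 1 (-1) 0.
Definition rot_mxV : 'M[R]_2 := mx2 0 (-1) 1 0.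

Fixpoint cont_prod s n : 'M[R]_2 :=
  if n is n'.+1 then cont_prod s n' *m cont_mx (nth 0 s n') else 1%:M.
Fixpoint cont_prodT s n : 'M[R]_2 :=
  if n is n'.+1 then cont_mxT (nth 0 s n') *m cont_prodT s n' else 1%:M.
Fixpoint cont_prodV s n : 'M[R]_2 :=
  if n is n'.+1 then cont_mxV (nth 0 s n') *m cont_prodV s n' else 1%:M.

Lemma cont_mxK t : cont_mx t *m cont_mxV t = 1%:M.
Proof. by rewrite mul_mx2 mx2_1; mx2_simpl. Qed.

Lemma cont_mxVK t : cont_mxV t *m cont_mx t = 1%:M.
Proof. by rewrite mul_mx2 mx2_1; mx2_simpl; rewrite addrC subrr. Qed.

Lemma cont_mxT_rot t : cont_mxT t *m rot_mx = rot_mx *m cont_mxV t.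
Proof. by rewrite !mul_mx2; mx2_simpl. Qed.

Lemma cont_prodK s n : cont_prod s n *m cont_prodV s n = 1%:M.
Proof.
elim: n => [|n IHn] /=; first by rewrite mul1mx.
by rewrite -mulmxA (mulmxA (cont_mx _)) cont_mxK mul1mx IHn.
Qed.

Lemma cont_prodVK s n : cont_prodV s n *m cont_prod s n = 1%:M.
Proof.
elim: n => [|n IHn] /=; first by rewrite mul1mx.
by rewrite -mulmxA (mulmxA (cont_prodV _ _)) IHn mul1mx cont_mxVK.
Qed.

Lemma cont_prodT_rot s n : cont_prodT s n = rot_mx *m cont_prodV s n *m rot_mxV.
Proof.
elim: n => [|n IHn] /=.
  by rewrite mulmx1 /rot_mx /rot_mxV mul_mx2 mx2_1; mx2_simpl.
by rewrite IHn !mulmxA cont_mxT_rot.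
Qed.

Lemma cont_prodT11 s n : cont_prodT s n i1 i1 = cont_prodV s n i0 i0.
Proof.
by rewrite cont_prodT_rot (mx2_eta (cont_prodV s n)) !mul_mx2; mx2_simpl.
Qed.

Lemma cont_prod_bottom s n :
  (cont_prod s n i1 i0, cont_prod s n i1 i1) = e_pair s n.
Proof.
elim: n => [|n /=]; first by rewrite /= mx2_1; mx2_simpl.
rewrite (mx2_eta (cont_prod s n)) mul_mx2; mx2_simpl.
by case: (e_pair s n) => x y [<- <-]; rewrite addrC.
Qed.

Lemma e_polyE s n : e_poly s n = cont_prod s n i1 i1.
Proof. by rewrite /e_poly -cont_prod_bottom. Qed.

Lemma e_poly_predE s n : e_poly_pred s n = cont_prod s n i1 i0.
Proof. by rewrite /e_poly_pred -cont_prod_bottom. Qed.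

Lemma cont_mx_conj t a b c d :
  cont_mx t *m mx2 a b c d *m cont_mxT t =
  mx2 d (- c - d * t) (- b - t * d) (a + (t * c + b * t) + t * d * t).
Proof. by rewrite /cont_mx /cont_mxT !mul_mx2; mx2_simpl; rewrite opprD mulrDl !addrA. Qed.

End Continuants.

Section InverseCorners.
Variable S : pzRingType.
Implicit Types (x y z : S) (A B : 'M[S]_2).

Lemma is_unit_inverses x y z : x * y = 1 -> z * x = 1 -> is_unit x.
Proof.
move=> xy zx; exists y; split=> //.
suff -> : y = z by [].
by rewrite -[z]mulr1 -xy mulrA zx mul1r.
Qed.

Lemma mx2_mul_eq1 A B : A *m B = 1%:M ->
  [/\ A i0 i0 * B i0 i0 + A i0 i1 * B i1 i0 = 1,
      A i0 i0 * B i0 i1 + A i0 i1 * B i1 i1 = 0,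
      A i1 i0 * B i0 i0 + A i1 i1 * B i1 i0 = 0 &
      A i1 i0 * B i0 i1 + A i1 i1 * B i1 i1 = 1].
Proof. by rewrite -!mx2_mulE => ->; rewrite mx2_1; mx2_simpl. Qed.

(* The three lemmas below are the one-sided halves of the Schur complement
   formula [(B i0 i0)^-1 = A i0 i0 - A i0 i1 (A i1 i1)^-1 A i1 i0] for [B = A^-1]. *)
Lemma corner_inv_rinv A B z : B *m A = 1%:M -> A i1 i1 * z = 1 ->
  B i0 i0 * (A i0 i0 - A i0 i1 * z * A i1 i0) = 1.
Proof.
case/mx2_mul_eq1 => BA00 BA01 _ _ Az.
have BA01' : B i0 i1 * A i1 i1 = - (B i0 i0 * A i0 i1).
  by apply/eqP; rewrite -addr_eq0 addrC BA01.
have B01E : B i0 i1 = - (B i0 i0 * A i0 i1 * z).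
  by rewrite -[B i0 i1]mulr1 -Az mulrA BA01' mulNr.
by rewrite mulrDr mulrN !mulrA -BA00 B01E mulNr addrC.
Qed.

Lemma corner_inv_linv A B w : A *m B = 1%:M -> w * A i1 i1 = 1 ->
  (A i0 i0 - A i0 i1 * w * A i1 i0) * B i0 i0 = 1.
Proof.
case/mx2_mul_eq1 => AB00 _ AB10 _ wA.
have AB10' : A i1 i1 * B i1 i0 = - (A i1 i0 * B i0 i0).
  by apply/eqP; rewrite -addr_eq0 addrC AB10.
have B10E : B i1 i0 = - (w * A i1 i0 * B i0 i0).
  by rewrite -[B i1 i0]mul1r -wA -mulrA AB10' mulrN mulrA.
by rewrite mulrDl mulNr -AB00 B10E mulrN !mulrA addrC.
Qed.

Lemma corner_linv_inv A B v : B *m A = 1%:M -> v * B i0 i0 = 1 ->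
  (B i1 i1 - B i1 i0 * v * B i0 i1) * A i1 i1 = 1.
Proof.
case/mx2_mul_eq1 => _ BA01 _ BA11 vB.
have BA01' : B i0 i0 * A i0 i1 = - (B i0 i1 * A i1 i1).
  by apply/eqP; rewrite -addr_eq0 BA01.
have A01E : A i0 i1 = - (v * B i0 i1 * A i1 i1).
  by rewrite -[A i0 i1]mul1r -vB -mulrA BA01' mulrN mulrA.
by rewrite mulrDl mulNr -BA11 A01E mulrN !mulrA addrC.
Qed.

End InverseCorners.

Section JordanHom.
Variables (R R' : pzRingType) (f : R -> R').
Hypothesis f_jordan : jordan_hom f.

Lemma jordanD a b : f (a + b) = f a + f b. Proof. by case: f_jordan. Qed.
Lemma jordan1 : f 1 = 1. Proof. by case: f_jordan. Qed.
Lemma jordanU a b : f (a * b * a) = f a * f b * f a. Proof. by case: f_jordan. Qed.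

Lemma jordan0 : f 0 = 0.
Proof. by apply: (addrI (f 0)); rewrite -jordanD !addr0. Qed.

Lemma jordanN a : f (- a) = - f a.
Proof. by apply: (addrI (f a)); rewrite -jordanD !subrr jordan0. Qed.

(* Linearization of [jordanU] at [a := x + z]. *)
Lemma jordanT x y z :
  f (x * y * z + z * y * x) = f x * f y * f z + f z * f y * f x.
Proof.
have expand (S : pzRingType) (a b c : S) :
    (a + c) * b * (a + c) = a * b * a + c * b * c + (a * b * c + c * b * a).
  by rewrite !mulrDl !mulrDr (addrC (c * b * a)) addrACA.
move: (jordanU (x + z) y).
by rewrite jordanD !expand !jordanD !jordanU => /addrI.
Qed.

(* The diagonal is mapped by [f]; the off-diagonal entries only through the
   symmetrized products that [jordanT] transports.  This is exactly what
   survives [X |-> cont_mx t *m X *m cont_mxT t]. *)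
Definition jrel (X : 'M[R]_2) (Y : 'M[R']_2) :=
  [/\ f (X i0 i0) = Y i0 i0, f (X i1 i1) = Y i1 i1,
      forall u, f (X i0 i1 * u + u * X i1 i0) = Y i0 i1 * f u + f u * Y i1 i0 &
      forall u, f (X i1 i0 * u + u * X i0 i1) = Y i1 i0 * f u + f u * Y i0 i1].

Lemma jrel_conj t X Y : jrel X Y ->
  jrel (cont_mx t *m X *m cont_mxT t) (cont_mx (f t) *m Y *m cont_mxT (f t)).
Proof.
have cross (S : pzRingType) (x y z w u : S) :
    (- x - y * z) * u + u * (- w - z * y)
    = - ((x * u + u * w) + (y * z * u + u * z * y)).
  rewrite mulrDl mulrDr !mulNr !mulrN !mulrA -!opprD; congr (- _).
  by rewrite addrACA.
rewrite (mx2_eta X) (mx2_eta Y) !cont_mx_conj /jrel; mx2_simpl.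
move: (X i0 i0) (X i0 i1) (X i1 i0) (X i1 i1) (Y i0 i0) (Y i0 i1) (Y i1 i0) (Y i1 i1).
move=> a b c d a' b' c' d' [fa fd fbc fcb]; split=> [//||u|u].
- rewrite 2!jordanD fa jordanU fd (addrC (t * c)) fbc.
  by rewrite (addrC (b' * _)).
- by rewrite !cross jordanN jordanD fcb jordanT fd.
- by rewrite !cross jordanN jordanD fbc jordanT fd.
Qed.

Lemma nth_map_jordan s i : nth 0 (map f s) i = f (nth 0 s i).
Proof.
case: (ltnP i (size s)) => [lt_i_s|le_s_i]; first by rewrite (nth_map 0).
by rewrite !nth_default ?size_map // jordan0.
Qed.

Lemma jrel_cont_prod s n X Y : jrel X Y ->
  jrel (cont_prod s n *m X *m cont_prodT s n)
       (cont_prod (map f s) n *m Y *m cont_prodT (map f s) n).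
Proof.
have regroup (S : pzRingType) (P M Z N Q : 'M[S]_2) :
    P *m M *m Z *m (N *m Q) = P *m (M *m Z *m N) *m Q.
  by rewrite !mulmxA.
elim: n X Y => [|n IHn] X Y XY /=; first by rewrite !mul1mx !mulmx1.
by rewrite !regroup nth_map_jordan; apply/IHn/jrel_conj.
Qed.

Lemma jrel_cont_prod11 s n X Y : jrel X Y ->
  f ((cont_prod s n *m X *m cont_prodT s n) i1 i1)
  = (cont_prod (map f s) n *m Y *m cont_prodT (map f s) n) i1 i1.
Proof. by case/(jrel_cont_prod s n). Qed.

Lemma jordan_cont_prodU s n x :
  f (cont_prod s n i1 i1 * x * cont_prodT s n i1 i1)
  = cont_prod (map f s) n i1 i1 * f x * cont_prodT (map f s) n i1 i1.
Proof.
have corner (S : pzRingType) (P Q : 'M[S]_2) y :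
    (P *m mx2 0 0 0 y *m Q) i1 i1 = P i1 i1 * y * Q i1 i1.
  by rewrite !mx2_mulE; mx2_simpl.
rewrite -!corner; apply: jrel_cont_prod11.
by split=> [||u|u]; mx2_simpl; rewrite ?jordan0.
Qed.

Lemma jordan_cont_prod_pred s n :
  f (cont_prod s n i1 i0 * cont_prodT s n i1 i1)
  = cont_prod (map f s) n i1 i0 * cont_prodT (map f s) n i1 i1.
Proof.
have corner (S : pzRingType) (P Q : 'M[S]_2) :
    (P *m mx2 0 1 0 0 *m Q) i1 i1 = P i1 i0 * Q i1 i1.
  by rewrite !mx2_mulE; mx2_simpl.
rewrite -!corner; apply: jrel_cont_prod11.
by split=> [||u|u]; mx2_simpl; rewrite ?jordan0.
Qed.

Lemma jordan_e_poly_corner s n : is_unit (e_poly s n) ->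
  exists y, e_poly (map f s) n * y * cont_prodV (map f s) n i0 i0 = 1.
Proof.
rewrite e_polyE => -[u [eu ue]].
have [v [_ vK]] : is_unit (cont_prodV s n i0 i0).
  exact: is_unit_inverses (corner_inv_rinv (cont_prodVK s n) eu)
                          (corner_inv_linv (cont_prodK s n) ue).
exists (f (u * v)); rewrite e_polyE -cont_prodT11 -jordan_cont_prodU.
by rewrite cont_prodT11 mulrA eu mul1r vK jordan1.
Qed.

Lemma jordan_e_poly_unit s n :
  is_unit (e_poly s n) -> is_unit (e_poly (map f s) n).
Proof.
case/jordan_e_poly_corner => y; rewrite e_polyE => eyK.
apply: (is_unit_inverses (y := y * cont_prodV (map f s) n i0 i0)).
  by rewrite mulrA.
exact: corner_linv_inv (cont_prodVK _ n) eyK.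
Qed.

Lemma jordan_e_poly_pred s n : is_unit (e_poly s n) ->
  e_poly_pred s n = 0 -> e_poly_pred (map f s) n = 0.
Proof.
case/jordan_e_poly_corner => y; rewrite !e_poly_predE e_polyE => eyK pred0.
have Kw := corner_inv_rinv (cont_prodVK (map f s) n) (etrans (mulrA _ _ _) eyK).
rewrite -[LHS]mulr1 -Kw mulrA -cont_prodT11 -jordan_cont_prod_pred pred0.
by rewrite mul0r jordan0 mul0r.
Qed.

End JordanHom.

Theorem theorem3p5 (R R' : pzRingType) (alpha : R -> R')
  (halpha : jordan_hom alpha) (n : nat) (T : seq R) (hT : size T = n) :
  (is_unit (e_poly T n) -> is_unit (e_poly (map alpha T) n)) /\
  (is_unit (e_poly T n) -> e_poly_pred T n = 0 ->
     e_poly_pred (map alpha T) n = 0).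
Proof.
split; [exact: jordan_e_poly_unit | exact: jordan_e_poly_pred].
Qed.
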